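(* Let $a,b\in\mathbb{N}$ with $b\le a$. Then there exist $n,k\in\mathbb{N}$ with $k\le n$ such that for every 2-coloring of the edges of $B_{n,k}$, there exists an induced monochromatic copy of $B_{a,b}$ in $B_{n,k}$; that is, there is a set $V'$ of vertices of $B_{n,k}$ such that the induced subgraph of $B_{n,k}$ on $V'$ is isomorphic to $B_{a,b}$ and all of its edges receive the same color.
   Context: For $n\in\mathbb{N}$, $[n]=\{1,\dots,n\}$, and for a set $X$, $\binom{X}{k}$ denotes the set of $k$-element subsets of $X$. For $k\le n$, $B_{n,k}$ is the bipartite graph with left vertex set $[n]$, right vertex set $\binom{[n]}{k}$, and edge set $\{(x,X)\in[n]\times\binom{[n]}{k} : x\in X\}$. For a graph $H=(V,E)$ and $V'\subseteq V$, the induced subgraph on $V'$ has vertex set $V'$ and edge set consisting of all edges of $H$ with both endpoints in $V'$. A 2-coloring of the edges is a map from the edge set to a 2-element set of colors. *)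

From mathcomp Require Import all_boot.
Set Implicit Arguments. Unset Strict Implicit. Unset Printing Implicit Defensive.

(* [n] is represented by 'I_n (elements 0..n-1). *)

Definition ksub (n k : nat) := {X : {set 'I_n} | #|X| == k}.

Definition Bvert (n k : nat) := ('I_n + ksub n k)%type.

Definition Badj (n k : nat) (u v : Bvert n k) : bool :=
  match u, v with
  | inl x, inr X => x \in val X
  | inr X, inl x => x \in val X
  | _, _ => false
  end.

Definition Bedge (n k : nat) := {p : 'I_n * ksub n k | p.1 \in val p.2}.

Definition edge_l (n k : nat) (e : Bedge n k) : Bvert n k := inl (val e).1.
Definition edge_r (n k : nat) (e : Bedge n k) : Bvert n k := inr (val e).2.

Definition coloring (n k : nat) := Bedge n k -> bool.

Definition induced_copy (a b n k : nat) (V' : {set Bvert n k}) : Prop :=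
  exists f : Bvert a b -> Bvert n k,
    [/\ injective f,
        forall v, v \in V' <-> exists u, f u = v
      & forall u w, Badj (f u) (f w) = Badj u w].

Definition monochromatic (n k : nat) (c : coloring n k) (V' : {set Bvert n k}) : Prop :=
  exists col : bool, forall e : Bedge n k,
    edge_l e \in V' -> edge_r e \in V' -> c e = col.

(* Order the left vertices and colour each k-subset t_0 < ... < t_(k-1) of them
   by its pattern, the k-tuple of colours of the edges (t_i, {t_0, ..., t_(k-1)}).
   By the hypergraph Ramsey theorem, for n large there is a set H of
   m = (a+1)(k+1) left vertices all of whose k-subsets have the same pattern p.
   With k = 2b, some b positions P of p carry the same colour.  Send the left
   vertex j of B_{a,b} to the element of H of index (j+1)(k+1), and a b-set X to
   the k-subset of H whose elements at the positions P are the images of X and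
   whose other elements sit strictly between these indices.  This is an induced
   copy of B_{a,b}, and each of its edges has the colour of a position in P. *)

From mathcomp Require Import all_boot zify.
Set Implicit Arguments. Unset Strict Implicit. Unset Printing Implicit Defensive.

Lemma sum_count_mem (C : finType) (s : seq C) : \sum_(i : C) count_mem i s = size s.
Proof.
elim: s => [|x s IHs] /=; first by rewrite big1.
rewrite big_split /= IHs (bigD1 x) //= eqxx big1 ?addn0 // => i /negbTE.
by rewrite eq_sym => ->.
Qed.

Lemma pigeonhole (C : finType) (s : seq C) m :
  0 < #|C| -> #|C| * m <= size s -> exists c0, m <= count_mem c0 s.
Proof.
move=> C_gt0 size_s; case: m size_s => [|m] size_s.
  by case/card_gt0P: C_gt0 => x _; exists x.
have [c0 big_c0 | small] := pickP (fun c0 => m < count_mem c0 s); first by exists c0.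
have : size s <= #|C| * m.
  rewrite -sum_count_mem -sum_nat_const; apply: leq_sum => i _.
  by rewrite leqNgt small.
by move/(leq_trans size_s); rewrite leq_pmul2l // ltnn.
Qed.

Lemma sorted_subseq_iota (s : seq nat) m :
  sorted ltn s -> {in s, forall i, i < m} -> subseq s (iota 0 m).
Proof.
move=> s_sorted s_lt; have -> : s = [seq i <- iota 0 m | i \in s].
  apply: (irr_sorted_eq ltn_trans ltnn) => //.
    exact: (sorted_filter ltn_trans _ (iota_ltn_sorted 0 m)).
  move=> i; rewrite mem_filter mem_iota /=.
  by case s_i: (i \in s); rewrite ?andbF // s_lt.
exact: filter_subseq.
Qed.

Section Homogeneous.
Variables (T : eqType) (C : Type).

Definition homogeneous (c : seq T -> C) s (H : seq T) (c0 : C) :=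
  forall t, subseq t H -> size t = s -> c t = c0.

Lemma homogeneous_subseq c s H H' c0 :
  subseq H' H -> homogeneous c s H c0 -> homogeneous c s H' c0.
Proof. by move=> sub_H' hom_H t /subseq_trans/(_ sub_H'); apply: hom_H. Qed.

Fixpoint end_homogeneous (c : seq T -> C) s (ps : seq (T * C)) : Prop :=
  if ps is (x, col) :: ps' then
    homogeneous (fun t => c (x :: t)) s (unzip1 ps') col /\ end_homogeneous c s ps'
  else True.

End Homogeneous.

Lemma end_homogeneous_filter (T C : eqType) (c : seq T -> C) s ps c0 :
  end_homogeneous c s ps ->
  homogeneous c s.+1 (unzip1 [seq p <- ps | p.2 == c0]) c0.
Proof.
elim: ps => [|[y col] ps IHps] /=; first by move=> _ [].
move=> [hom_y /IHps hom_ps] [|x t] //=.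
case: eqP => [col_c0|_] /=; last exact: hom_ps.
subst col; case: eqP => [->|_]; last exact: hom_ps.
move=> sub_t [size_t]; apply: hom_y size_t; apply: subseq_trans sub_t _.
exact/map_subseq/filter_subseq.
Qed.

Definition ramsey_property s m (C : finType) :=
  exists N, forall (T : eqType) (c : seq T -> C) (S : seq T), N <= size S ->
    exists H c0, [/\ subseq H S, size H = m & homogeneous c s H c0].

Lemma ramsey0 m C : ramsey_property 0 m C.
Proof.
exists m => T c S le_mS; exists (take m S), (c [::]); split.
- exact: take_subseq.
- exact: size_takel.
- by move=> t _ /size0nil ->.
Qed.

Lemma end_homogeneous_chain s (C : finType) :
    (forall m, ramsey_property s m C) ->
  forall L, exists N, forall (T : eqType) (c : seq T -> C) (S : seq T), N <= size S ->
    exists ps : seq (T * C),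
      [/\ size ps = L, subseq (unzip1 ps) S & end_homogeneous c s ps].
Proof.
move=> ramsey_s; elim=> [|L [NL chainL]].
  by exists 0 => T c S _; exists [::]; split; rewrite ?sub0seq.
have [N ramseyN] := ramsey_s NL.
exists N.+1 => T c [|x S] //= le_NS.
have [H [c0 [sub_H size_H hom_H]]] := ramseyN T (fun t => c (x :: t)) S le_NS.
have [ps [size_ps sub_ps hom_ps]] := chainL T c H (eq_leq (esym size_H)).
exists ((x, c0) :: ps); split => /=.
- by rewrite size_ps.
- by rewrite eqxx (subseq_trans sub_ps).
- by split=> //; apply: homogeneous_subseq hom_H.
Qed.

Theorem ramsey s m (C : finType) : ramsey_property s m C.
Proof.
elim: s m => [|s IHs] m; first exact: ramsey0.
have [N chainN] := end_homogeneous_chain IHs (#|C| * m).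
exists N => T c S le_NS.
have [ps [size_ps sub_ps hom_ps]] := chainN T c S le_NS.
have C_gt0 : 0 < #|C| by apply/card_gt0P; exists (c [::]).
have [|c0] := @pigeonhole C (unzip2 ps) m C_gt0; first by rewrite size_map size_ps.
rewrite count_map -size_filter => le_m.
exists (take m (unzip1 [seq p <- ps | p.2 == c0])), c0; split.
- apply: subseq_trans (take_subseq _ _) (subseq_trans _ sub_ps).
  exact/map_subseq/filter_subseq.
- by rewrite size_takel // size_map.
- exact/(homogeneous_subseq (take_subseq _ _))/end_homogeneous_filter.
Qed.

Lemma count_leq_lt (s : seq nat) i i' :
  i < i' -> i' \in s -> count (fun p => p <= i) s < count (fun p => p <= i') s.
Proof.
move=> lt_ii'; elim: s => //= p s IHs; rewrite inE.
have le_count : count (fun p => p <= i) s <= count (fun p => p <= i') s.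
  by apply: sub_count => q /= /leq_trans; apply; apply: ltnW.
case/orP => [/eqP <-|/IHs lt_count].
  by rewrite leqnn [i' <= i]leqNgt lt_ii' add1n ltnS.
by case: (leqP p i) => [le_pi|_]; rewrite ?(leq_trans le_pi (ltnW lt_ii')) /=; lia.
Qed.

Lemma count_leq_nth (s : seq nat) l :
  sorted ltn s -> l < size s -> count (fun p => p <= nth 0 s l) s = l.+1.
Proof.
elim: s l => [|q s IHs] l //= s_sorted.
have q_lt : all (ltn q) s := order_path_min ltn_trans s_sorted.
case: l => [|l] /= lt_ls.
  rewrite leqnn (eq_in_count (a2 := pred0)) ?count_pred0 // => p /(allP q_lt) /= lt_qp.
  by rewrite leqNgt lt_qp.
have /(allP q_lt) /ltnW -> : nth 0 s l \in s by apply: mem_nth.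
by rewrite IHs // (path_sorted s_sorted).
Qed.

Section Slots.
Variables (a k : nat) (P xs : seq nat).
Hypotheses (xs_sorted : sorted ltn xs) (size_P : size P = size xs)
  (xs_lt : {in xs, forall j, j < a}).

Definition rank i := count (fun p => p <= i) P.

Definition block l := if l is l'.+1 then (nth 0 xs l').+1 else 0.

(* Blocks have length [k.+1]; their starts, which will host the left vertices,
   are hit exactly by the positions in [P]. *)
Definition slot i := block (rank i) * k.+1 + (if i \in P then 0 else i.+1).

Lemma rank_le_size i : rank i <= size xs.
Proof. by rewrite -size_P count_size. Qed.

Lemma rank_mono i i' : i <= i' -> rank i <= rank i'.
Proof. by move=> le_ii'; apply: sub_count => q /= /leq_trans; apply. Qed.

Lemma rank_lt i i' : i < i' -> i' \in P -> rank i < rank i'.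
Proof. exact: count_leq_lt. Qed.

Lemma block_lt l l' : l < l' -> l' <= size xs -> block l < block l'.
Proof.
case: l' => // l'; case: l => // l; rewrite !ltnS => lt_ll' lt_l'.
by rewrite (sorted_ltn_nth ltn_trans) // inE (ltn_trans lt_ll').
Qed.

Lemma block_le l : l <= size xs -> block l <= a.
Proof. by case: l => // l lt_l; apply/xs_lt/mem_nth. Qed.

Lemma slot_offset_lt i : i < k -> (if i \in P then 0 else i.+1) < k.+1.
Proof. by case: ifP. Qed.

Lemma slot_div i : i < k -> slot i %/ k.+1 = block (rank i).
Proof. by move=> lt_ik; rewrite divnMDl // divn_small ?addn0 ?slot_offset_lt. Qed.

Lemma slot_mod i : i < k -> slot i %% k.+1 = if i \in P then 0 else i.+1.
Proof. by move=> lt_ik; rewrite modnMDl modn_small ?slot_offset_lt. Qed.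

Lemma slot_lt_block i : i < k -> slot i < (block (rank i)).+1 * k.+1.
Proof. by move=> lt_ik; rewrite mulSn addnC ltn_add2l slot_offset_lt. Qed.

Lemma slot_lt i : i < k -> slot i < a.+1 * k.+1.
Proof.
move=> lt_ik; apply: leq_trans (slot_lt_block lt_ik) _.
by rewrite leq_mul2r ltnS block_le ?orbT ?rank_le_size.
Qed.

Lemma slot_increasing i i' : i < i' -> i' < k -> slot i < slot i'.
Proof.
move=> lt_ii' lt_i'k; have lt_ik := ltn_trans lt_ii' lt_i'k.
have [lt_rank | gt_rank | eq_rank] := ltngtP (rank i) (rank i').
- apply: leq_trans (slot_lt_block lt_ik) (leq_trans _ (leq_addr _ _)).
  by rewrite leq_mul2r block_lt ?orbT ?rank_le_size.
- by have := rank_mono (ltnW lt_ii'); rewrite leqNgt gt_rank.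
have i'_notin : i' \notin P by apply/negP => /(rank_lt lt_ii'); rewrite eq_rank ltnn.
by rewrite /slot eq_rank (negbTE i'_notin) ltn_add2l; case: (i \in P).
Qed.

Lemma slot_nth l :
  sorted ltn P -> l < size P -> slot (nth 0 P l) = (nth 0 xs l).+1 * k.+1.
Proof. by move=> P_sorted lt_l; rewrite /slot /rank count_leq_nth // mem_nth ?addn0. Qed.

Lemma slot_eq_block i j : i < k -> slot i = j.+1 * k.+1 -> j \in xs.
Proof.
move=> lt_ik slot_i; have := slot_div lt_ik; have := slot_mod lt_ik.
rewrite slot_i modnMl (mulnK _ (ltn0Sn k)); case: ifP => // _ _.
rewrite /block; case: (rank i) (rank_le_size i) => // l lt_l [->].
exact: mem_nth.
Qed.

End Slots.

Section InducedCopy.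
Variables (a b k n : nat) (c : coloring n k) (x0 : 'I_n).

Definition edge_color (x : 'I_n) (t : seq 'I_n) : bool :=
  if insub [set y in t] is Some K then
    if insub (x, K) is Some e then c e else false
  else false.

Lemma edge_colorE (e : Bedge n k) t :
  [set y in t] = val (val e).2 -> edge_color (val e).1 t = c e.
Proof.
move=> t_e; rewrite /edge_color; case: insubP => [K _ val_K | ]; last first.
  by rewrite t_e (valP (val e).2).
have -> : K = (val e).2 by apply: val_inj; rewrite val_K.
case: insubP => [e' _ val_e' | ]; last by rewrite -surjective_pairing (valP e).
by congr c; apply: val_inj; rewrite val_e' -surjective_pairing.
Qed.

Definition pattern (t : seq 'I_n) : {ffun 'I_k -> bool} :=
  [ffun i : 'I_k => edge_color (nth x0 t i) t].

Variables (H : seq 'I_n) (p : {ffun 'I_k -> bool}) (cc : bool) (P : seq nat).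
Hypotheses (H_uniq : uniq H) (size_H : size H = a.+1 * k.+1)
  (H_pattern : homogeneous pattern k H p)
  (P_sorted : sorted ltn P) (size_P : size P = b) (P_lt : {in P, forall i, i < k})
  (P_color : forall i : 'I_k, val i \in P -> p i = cc).

Definition indices (X : ksub a b) : seq nat := [seq val j | j <- enum (val X)].

Lemma indices_sorted (X : ksub a b) : sorted ltn (indices X).
Proof.
apply: (subseq_sorted ltn_trans (s2 := iota 0 a)); last exact: iota_ltn_sorted.
rewrite -val_enum_ord; apply: map_subseq.
by rewrite enumT /enum_mem; apply: filter_subseq.
Qed.

Lemma size_indices (X : ksub a b) : size (indices X) = b.
Proof. by rewrite size_map -cardE; apply/eqP/(valP X). Qed.

Lemma indices_lt (X : ksub a b) : {in indices X, forall j, j < a}.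
Proof. by move=> _ /mapP [j _ ->]; apply: ltn_ord. Qed.

Lemma mem_indices (X : ksub a b) (j : 'I_a) : (val j \in indices X) = (j \in val X).
Proof. by rewrite (mem_map val_inj) mem_enum. Qed.

Let size_P_indices (X : ksub a b) : size P = size (indices X).
Proof. by rewrite size_indices. Qed.

Definition slots (X : ksub a b) := [seq slot k P (indices X) i | i <- iota 0 k].

Lemma slots_lt (X : ksub a b) : {in slots X, forall i, i < a.+1 * k.+1}.
Proof.
move=> s /mapP [i]; rewrite mem_iota => lt_ik ->.
exact: slot_lt (size_P_indices X) (@indices_lt X) _ lt_ik.
Qed.

Lemma slots_sorted (X : ksub a b) : sorted ltn (slots X).
Proof.
apply: (homo_sorted_in (P := gtn k)); last exact: iota_ltn_sorted.
  by move=> i i' _ lt_i'k lt_ii'; apply: slot_increasing lt_ii' lt_i'k;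
    [exact: indices_sorted | exact: size_P_indices].
by apply/allP => i; rewrite mem_iota.
Qed.

Definition left_copy (j : 'I_a) : 'I_n := nth x0 H (j.+1 * k.+1).

Definition right_seq (X : ksub a b) : seq 'I_n := [seq nth x0 H i | i <- slots X].

Lemma right_seq_subseq (X : ksub a b) : subseq (right_seq X) H.
Proof.
rewrite /right_seq -{2}(mkseq_nth x0 H) size_H; apply: map_subseq.
exact: sorted_subseq_iota (slots_sorted X) (@slots_lt X).
Qed.

Lemma size_right_seq (X : ksub a b) : size (right_seq X) = k.
Proof. by rewrite !size_map size_iota. Qed.

Lemma card_right_seq (X : ksub a b) : #|[set y in right_seq X]| == k.
Proof.
by rewrite cardsE (card_uniqP (subseq_uniq (right_seq_subseq X) H_uniq)) size_right_seq.
Qed.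

Definition right_copy (X : ksub a b) : ksub n k :=
  Sub [set y in right_seq X] (card_right_seq X).

Lemma left_copy_index_lt (j : 'I_a) : j.+1 * k.+1 < size H.
Proof. by rewrite size_H ltn_pmul2r // ltnS. Qed.

Lemma left_copy_inj : injective left_copy.
Proof.
move=> j j' /eqP; rewrite /left_copy nth_uniq ?left_copy_index_lt //.
by rewrite eqn_mul2r => /eqP [] /val_inj.
Qed.

Lemma nth_right_seq (X : ksub a b) (j : 'I_a) : j \in val X ->
  exists2 i, i \in P & nth x0 (right_seq X) i = left_copy j.
Proof.
rewrite -mem_indices => j_X; set l := index (val j) (indices X).
have lt_l : l < size P by rewrite (size_P_indices X) index_mem.
exists (nth 0 P l); first exact: mem_nth.
have lt_ik : nth 0 P l < k by apply/P_lt/mem_nth.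
rewrite (nth_map 0) ?size_map ?size_iota // (nth_map 0) ?size_iota // nth_iota //.
by rewrite slot_nth // nth_index.
Qed.

Lemma mem_right_seq (X : ksub a b) (j : 'I_a) :
  (left_copy j \in right_seq X) = (j \in val X).
Proof.
apply/idP/idP => [|/nth_right_seq [i /P_lt lt_ik <-]]; last first.
  by rewrite mem_nth ?size_right_seq.
case/mapP => s /[dup] /slots_lt lt_slot /mapP [i].
rewrite mem_iota => lt_ik s_i; subst s => /eqP.
rewrite /left_copy nth_uniq ?left_copy_index_lt ?size_H // => /eqP slot_i.
by rewrite -mem_indices (slot_eq_block (size_P_indices X) lt_ik (esym slot_i)).
Qed.

Lemma edge_color_right_seq (X : ksub a b) (j : 'I_a) :
  j \in val X -> edge_color (left_copy j) (right_seq X) = cc.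
Proof.
case/nth_right_seq => i i_P <-; have lt_ik := P_lt i_P.
have /ffunP /(_ (Ordinal lt_ik)) := H_pattern (right_seq_subseq X) (size_right_seq X).
by rewrite ffunE P_color.
Qed.

Definition copy (v : Bvert a b) : Bvert n k :=
  match v with inl j => inl (left_copy j) | inr X => inr (right_copy X) end.

Lemma copy_inj : injective copy.
Proof.
move=> [j|X] [j'|X'] //= [eq_copy]; first by rewrite (left_copy_inj eq_copy).
congr inr; apply/val_inj/setP => j.
have /setP /(_ (left_copy j)) := eq_copy.
by rewrite !in_set !mem_right_seq.
Qed.

Lemma copy_adj u w : Badj (copy u) (copy w) = Badj u w.
Proof. by case: u w => [j|X] [j'|X'] //=; rewrite in_set mem_right_seq. Qed.

Lemma copy_monochromatic : monochromatic c [set copy u | u : Bvert a b].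
Proof.
exists cc => e /imsetP [[j|X] _ //= [e_j]] /imsetP [[j'|X] _ //= [e_X]].
have := valP e; rewrite /= e_j e_X in_set mem_right_seq => j_X.
by rewrite -(edge_colorE (t := right_seq X)) ?e_X // e_j edge_color_right_seq.
Qed.

Lemma induced_monochromatic_copy :
  exists V' : {set Bvert n k}, induced_copy a b V' /\ monochromatic c V'.
Proof.
exists [set copy u | u : Bvert a b]; split; last exact: copy_monochromatic.
exists copy; split; [exact: copy_inj | | exact: copy_adj].
by move=> v; split => [/imsetP [u _ ->] | [u <-]]; [exists u | apply: imset_f].
Qed.

End InducedCopy.

Lemma monochromatic_positions b (p : {ffun 'I_b.*2 -> bool}) :
  exists cc (P : seq nat), [/\ sorted ltn P, size P = b, {in P, forall i, i < b.*2}
    & forall i : 'I_b.*2, val i \in P -> p i = cc].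
Proof.
have [||cc] := @pigeonhole bool [seq p i | i <- enum 'I_b.*2] b; rewrite ?card_bool //.
  by rewrite size_map size_enum_ord mul2n.
rewrite count_map -size_filter => le_b.
exists cc, (take b [seq val i | i <- enum 'I_b.*2 & p i == cc]); split.
- apply: (subseq_sorted ltn_trans _ (iota_ltn_sorted 0 b.*2)).
  rewrite -val_enum_ord; apply: subseq_trans (take_subseq _ _) _.
  exact/map_subseq/filter_subseq.
- by rewrite size_takel ?size_map; last exact: le_b.
- by move=> j /mem_take /mapP [i _ ->]; apply: ltn_ord.
- by move=> i /mem_take; rewrite (mem_map val_inj) mem_filter => /andP [/eqP].
Qed.

Theorem mainTheorem2 (a b : nat) : b <= a ->
  exists n k : nat, k <= n /\
    forall c : coloring n k,
      exists V' : {set Bvert n k}, induced_copy a b V' /\ monochromatic c V'.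
Proof.
move=> _; pose k := b.*2; pose m := a.+1 * k.+1.
have [N ramseyN] := ramsey k m {ffun 'I_k -> bool}.
exists (N + m).+1, k; split; first by rewrite /m; nia.
move=> c; have size_enum : N <= size (enum 'I_(N + m).+1) by rewrite size_enum_ord; lia.
have [H [p [sub_H size_H H_pattern]]] := ramseyN _ (pattern c ord0) _ size_enum.
have [cc [P [P_sorted size_P P_lt P_color]]] := monochromatic_positions p.
exact: induced_monochromatic_copy (subseq_uniq sub_H (enum_uniq _)) size_H H_pattern
  P_sorted size_P P_lt P_color.
Qed.
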